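(* Let $\lambda$ be a nonzero real number. For every integer $n\ge 0$, $$\sum_{k=0}^{n}S_{2,\lambda}(n,k)\,2^{-k}(-1)^{k}k!=W_{n,\lambda}\!\left(-\tfrac{1}{2}\right)=\frac{2}{n+1}\Big(\beta_{n+1,\lambda}-2^{n+1}\beta_{n+1,\frac{\lambda}{2}}\Big).$$
   Context: For nonzero $\lambda\in\mathbb{R}$, $e_{\lambda}(t)=(1+\lambda t)^{1/\lambda}$; $(x)_{0,\lambda}=1$, $(x)_{n,\lambda}=x(x-\lambda)\cdots(x-(n-1)\lambda)$ for $n\ge1$; $(x)_0=1$, $(x)_n=x(x-1)\cdots(x-n+1)$. The degenerate Stirling numbers of the second kind $S_{2,\lambda}(n,k)$ are defined by $(x)_{n,\lambda}=\sum_{k=0}^{n}S_{2,\lambda}(n,k)(x)_{k}$. The degenerate geometric polynomials are $W_{n,\lambda}(x)=\sum_{k=0}^{n}S_{2,\lambda}(n,k)\,k!\,x^{k}$. The Carlitz degenerate Bernoulli numbers $\beta_{n,\mu}$ (for nonzero $\mu$) are defined by $\frac{t}{e_{\mu}(t)-1}=\sum_{n=0}^{\infty}\beta_{n,\mu}\frac{t^{n}}{n!}$. *)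

From Stdlib Require Import Reals Arith Factorial.
From Coquelicot Require Import Coquelicot.
Open Scope R_scope.

Fixpoint dfall (lam x : R) (n : nat) : R :=
  match n with
  | O => 1
  | S m => dfall lam x m * (x - INR m * lam)
  end.

Definition falling (x : R) (n : nat) : R := dfall 1 x n.

Definition e_deg (lam t : R) : R := Rpower (1 + lam * t) (/ lam).

(* S is the table of degenerate Stirling numbers of the second kind:
   (x)_{n,lam} = sum_{k=0}^n S n k (x)_k for all real x and all n.
   (Uniquely determines S n k for k <= n.) *)
Definition is_deg_stirling2 (lam : R) (S : nat -> nat -> R) : Prop :=
  forall (n : nat) (x : R),
    dfall lam x n = sum_f_R0 (fun k => S n k * falling x k) n.

Definition W_deg (S : nat -> nat -> R) (n : nat) (x : R) : R :=
  sum_f_R0 (fun k => S n k * INR (fact k) * x ^ k) n.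

Definition is_carlitz_bernoulli (mu : R) (b : nat -> R) : Prop :=
  exists delta : R, 0 < delta /\
    forall t : R, 0 < Rabs t < delta ->
      is_pseries (fun n => b n / INR (fact n)) t (t / (e_deg mu t - 1)).

From Stdlib Require Import Reals Factorial Lra Lia.
From Coquelicot Require Import Coquelicot.
Open Scope R_scope.

(* At [x = -1/2] the generating function [1 / (1 - x (e_lam(t) - 1))] of the
   degenerate geometric polynomials becomes [2 / (e_lam(t) + 1)], while
   [e_{lam/2}(2t) = e_lam(t)^2] turns the difference of the two Carlitz generating
   functions into [t/(e_lam(t) - 1) - 2t/(e_lam(t)^2 - 1) = t / (e_lam(t) + 1)].
   Multiplying by [e_lam(t) + 1] gives a triangular binomial recurrence satisfied
   both by [beta_{n,lam} - 2^n beta_{n,lam/2}] (uniqueness of power series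
   coefficients) and by [n W_{n-1,lam}(-1/2) / 2] (comparing coefficients of
   [(x + 1)_{n,lam}] in the falling factorial basis), so the two sequences agree. *)

Lemma CV_radius_ge_ex_pseries (a : nat -> R) (x : R) :
  ex_pseries a x -> Rbar_le (Rabs x) (CV_radius a).
Proof.
intros [l Hl]. apply Rbar_not_lt_le. intros Hlt.
apply (CV_disk_outside a x Hlt), ex_series_lim_0.
exists l. apply is_pseries_R in Hl. exact Hl.
Qed.

Lemma ball0_Rabs (d y : R) : ball 0 d y -> Rabs y < d.
Proof.
unfold ball; simpl; unfold AbsRing_ball, abs, minus, plus, opp; simpl.
now rewrite Ropp_0, Rplus_0_r.
Qed.

Lemma pseries_coef_eq0 (q : nat -> R) (d : R) : 0 < d ->
  (forall t, 0 < Rabs t < d -> is_pseries q t 0) -> forall n, q n = 0.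
Proof.
intros Hd Hq n.
assert (Hpunct : forall y, ball 0 d y -> y <> 0 -> PSeries q y = 0).
{ intros y Hy Hy0. apply is_pseries_unique, Hq.
  split; [apply Rabs_pos_lt, Hy0 | apply ball0_Rabs, Hy]. }
assert (Hr : Rbar_lt 0 (CV_radius q)).
{ apply Rbar_lt_le_trans with (Rabs (d / 2)).
  - simpl. rewrite Rabs_pos_eq; lra.
  - apply CV_radius_ge_ex_pseries. eexists. apply Hq. rewrite Rabs_pos_eq; lra. }
assert (H0 : PSeries q 0 = 0).
{ assert (Hlim : is_lim (PSeries q) 0 0).
  { apply is_lim_ext_loc with (fun _ => 0); [|apply is_lim_const].
    exists (mkposreal d Hd). intros y Hy Hy0. symmetry. exact (Hpunct y Hy Hy0). }
  assert (Hcont : is_lim (PSeries q) 0 (PSeries q 0)).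
  { apply is_lim_continuity, PSeries_continuity. rewrite Rabs_R0. exact Hr. }
  apply is_lim_unique in Hlim, Hcont. rewrite Hcont in Hlim. injection Hlim; auto. }
change 0 with ((fun _ : nat => 0) n).
apply PSeries_ext_recip; [exact Hr | rewrite CV_radius_const_0; exact I |].
exists (mkposreal d Hd). intros y Hy. rewrite PSeries_const_0.
destruct (Req_dec y 0) as [->|Hy0]; [exact H0 | exact (Hpunct y Hy Hy0)].
Qed.

Lemma is_derive_0_Rabs_lt_const (f : R -> R) (r t : R) :
  (forall u, Rabs u < r -> is_derive f u 0) -> Rabs t < r -> f t = f 0.
Proof.
intros Hf Ht.
destruct (Rtotal_order t 0) as [Hneg|[->|Hpos]]; [| reflexivity |].
- apply eq_is_derive; [|exact Hneg].
  intros u Hu. apply Hf. rewrite Rabs_left in Ht by exact Hneg.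
  apply Rabs_def1; lra.
- symmetry. apply eq_is_derive; [|exact Hpos].
  intros u Hu. apply Hf. rewrite Rabs_pos_eq in Ht by lra.
  apply Rabs_def1; lra.
Qed.

Definition e_deg_coef (lam : R) (n : nat) : R := dfall lam 1 n / INR (fact n).

Lemma dfall1_bound (lam : R) (n : nat) :
  Rabs (dfall lam 1 n) <= INR (fact n) * (1 + Rabs lam) ^ n.
Proof.
induction n as [|n IH]; simpl dfall.
- rewrite Rabs_R1. simpl. lra.
- rewrite Rabs_mult, fact_simpl, mult_INR, S_INR. simpl pow.
  assert (Hn : 0 <= INR n) by apply pos_INR.
  assert (Hl : 0 <= Rabs lam) by apply Rabs_pos.
  assert (Hstep : Rabs (1 - INR n * lam) <= (INR n + 1) * (1 + Rabs lam)).
  { eapply Rle_trans; [apply Rabs_triang|].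
    rewrite Rabs_R1, Rabs_Ropp, Rabs_mult, (Rabs_pos_eq (INR n)) by exact Hn. nra. }
  replace ((INR n + 1) * INR (fact n) * ((1 + Rabs lam) * (1 + Rabs lam) ^ n))
    with (INR (fact n) * (1 + Rabs lam) ^ n * ((INR n + 1) * (1 + Rabs lam))) by ring.
  apply Rmult_le_compat; [apply Rabs_pos | apply Rabs_pos | exact IH | exact Hstep].
Qed.

Lemma CV_radius_e_deg_coef (lam : R) :
  Rbar_le (/ (1 + Rabs lam)) (CV_radius (e_deg_coef lam)).
Proof.
apply (proj1 (CV_radius_bounded _)). exists 1. intros n.
assert (HM : 0 < 1 + Rabs lam) by (pose proof (Rabs_pos lam); lra).
assert (Hf : 0 < INR (fact n)) by apply INR_fact_lt_0.
assert (Hp : 0 < (1 + Rabs lam) ^ n) by (apply pow_lt; lra).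
unfold e_deg_coef, Rdiv.
rewrite pow_inv, Rabs_mult, Rabs_mult, !Rabs_inv, (Rabs_pos_eq (INR (fact n))),
  (Rabs_pos_eq ((1 + Rabs lam) ^ n)) by lra.
replace (Rabs (dfall lam 1 n) * / INR (fact n) * / (1 + Rabs lam) ^ n)
  with (Rabs (dfall lam 1 n) / (INR (fact n) * (1 + Rabs lam) ^ n)) by (field; lra).
apply Rle_div_l; [nra|]. rewrite Rmult_1_l. apply dfall1_bound.
Qed.

Lemma e_deg_coef_succ (lam : R) (n : nat) :
  INR (S n) * e_deg_coef lam (S n) = e_deg_coef lam n * (1 - INR n * lam).
Proof.
unfold e_deg_coef. simpl dfall. rewrite fact_simpl, mult_INR.
assert (Hf : 0 < INR (fact n)) by apply INR_fact_lt_0.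
assert (Hs : 0 < INR (S n)) by (apply lt_0_INR; lia).
field. split; lra.
Qed.

Lemma PSeries_e_deg_coef_ode (lam t : R) : lam <> 0 ->
  Rbar_lt (Rabs t) (CV_radius (e_deg_coef lam)) ->
  PSeries (PS_derive (e_deg_coef lam)) t * (1 + lam * t) = PSeries (e_deg_coef lam) t.
Proof.
intros Hl Ht.
replace (PSeries (PS_derive (e_deg_coef lam)) t * (1 + lam * t))
  with (PSeries (PS_derive (e_deg_coef lam)) t
        + PSeries (PS_scal lam (PS_incr_1 (PS_derive (e_deg_coef lam)))) t)
  by (rewrite PSeries_scal, PSeries_incr_1; ring).
rewrite <- PSeries_plus.
- apply PSeries_ext. intros [|n].
  + change (INR 1 * e_deg_coef lam 1 + lam * 0 = e_deg_coef lam 0).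
    rewrite e_deg_coef_succ. simpl. ring.
  + change (INR (S (S n)) * e_deg_coef lam (S (S n)) + lam * (INR (S n) * e_deg_coef lam (S n))
            = e_deg_coef lam (S n)).
    rewrite e_deg_coef_succ, (S_INR n). ring.
- apply CV_radius_inside. rewrite CV_radius_derive. exact Ht.
- apply CV_radius_inside.
  rewrite CV_radius_scal, CV_radius_incr_1, CV_radius_derive by exact Hl. exact Ht.
Qed.

Lemma one_add_mul_gt0 (lam u : R) : Rabs u < / (1 + Rabs lam) -> 0 < 1 + lam * u.
Proof.
intros Hu.
assert (HM : 0 < 1 + Rabs lam) by (pose proof (Rabs_pos lam); lra).
assert (Hlu : Rabs (lam * u) < 1).
{ rewrite Rabs_mult.
  apply Rle_lt_trans with (Rabs lam * / (1 + Rabs lam)).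
  - apply Rmult_le_compat_l; [apply Rabs_pos | lra].
  - apply Rmult_lt_reg_r with (1 + Rabs lam); [exact HM|].
    rewrite Rmult_assoc, Rinv_l by lra. lra. }
pose proof (Rle_abs (- (lam * u))) as H. rewrite Rabs_Ropp in H. lra.
Qed.

Lemma PSeries_e_deg_coef (lam t : R) : lam <> 0 -> Rabs t < / (1 + Rabs lam) ->
  PSeries (e_deg_coef lam) t = e_deg lam t.
Proof.
intros Hl Ht.
assert (Hin : forall u, Rabs u < / (1 + Rabs lam) ->
          Rbar_lt (Rabs u) (CV_radius (e_deg_coef lam))).
{ intros u Hu. eapply Rbar_lt_le_trans; [|apply CV_radius_e_deg_coef]. exact Hu. }
(* [PSeries] and [e_deg] solve the same linear ODE [(1 + lam u) y' = y], so their
   ratio is constant. *)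
set (G u := PSeries (e_deg_coef lam) u * exp (- / lam * ln (1 + lam * u))).
assert (HG : forall u, Rabs u < / (1 + Rabs lam) -> is_derive G u 0).
{ intros u Hu. pose proof (one_add_mul_gt0 lam u Hu) as Hpos. unfold G. auto_derive.
  - repeat split; [apply ex_derive_PSeries, Hin, Hu | exact Hpos].
  - rewrite Derive_PSeries by (apply Hin, Hu).
    rewrite <- (PSeries_e_deg_coef_ode lam u Hl (Hin u Hu)). field. split; lra. }
assert (Gt : G t = 1).
{ rewrite (is_derive_0_Rabs_lt_const G _ t HG Ht). unfold G.
  rewrite PSeries_0, Rmult_0_r, Rplus_0_r, ln_1, Rmult_0_r, exp_0.
  unfold e_deg_coef. simpl. field. }
unfold G in Gt. unfold e_deg, Rpower.
replace (- / lam * ln (1 + lam * t)) with (- (/ lam * ln (1 + lam * t))) in Gt by ring.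
rewrite exp_Ropp in Gt. pose proof (exp_pos (/ lam * ln (1 + lam * t))).
apply (Rmult_eq_reg_r (/ exp (/ lam * ln (1 + lam * t)))); [|apply Rinv_neq_0_compat; lra].
rewrite Gt, Rinv_r; lra.
Qed.

Lemma CV_radius_gt_punctured (a : nat -> R) (d t : R) :
  (forall u, 0 < Rabs u < d -> ex_pseries a u) -> Rabs t < d ->
  Rbar_lt (Rabs t) (CV_radius a).
Proof.
intros Ha Ht. pose proof (Rabs_pos t).
set (u := (Rabs t + d) / 2).
apply Rbar_lt_le_trans with (Rabs u).
- simpl. rewrite (Rabs_pos_eq u); unfold u; lra.
- apply CV_radius_ge_ex_pseries, Ha. rewrite (Rabs_pos_eq u); unfold u; lra.
Qed.

Lemma is_pseries_X (t : R) : is_pseries (fun n => if Nat.eqb n 1 then 1 else 0) t t.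
Proof.
apply is_pseries_R, is_series_decr_1, is_series_decr_1.
match goal with |- is_series _ ?l => replace l with 0 by (unfold plus, opp; simpl; ring) end.
apply is_series_ext with (fun _ => 0); [intros n; simpl; ring|].
apply filterlim_ext with (fun _ => 0); [|apply filterlim_const].
intros n. rewrite sum_n_const. simpl. ring.
Qed.

Lemma e_deg_gt0 (lam t : R) : 0 < e_deg lam t.
Proof. apply exp_pos. Qed.

Lemma e_deg_neq1 (lam t : R) : lam <> 0 -> t <> 0 -> 0 < 1 + lam * t -> e_deg lam t <> 1.
Proof.
intros Hl Ht Hp E. unfold e_deg, Rpower in E.
apply (f_equal ln) in E. rewrite ln_exp, ln_1 in E.
assert (Hln : ln (1 + lam * t) = ln 1).
{ rewrite ln_1. apply (Rmult_eq_reg_l (/ lam)); [lra | apply Rinv_neq_0_compat, Hl]. }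
apply ln_inv in Hln; [|exact Hp|lra].
assert (lam * t = 0) as Hz by lra. apply Rmult_integral in Hz. tauto.
Qed.

Lemma e_deg_half_double (lam t : R) : lam <> 0 ->
  e_deg (lam / 2) (2 * t) = e_deg lam t * e_deg lam t.
Proof.
intros Hl. unfold e_deg, Rpower. rewrite <- exp_plus.
replace (1 + lam / 2 * (2 * t)) with (1 + lam * t) by field.
f_equal. field. exact Hl.
Qed.

Section CarlitzDifference.

Variables (lam : R) (b1 b2 : nat -> R).
Hypotheses (Hlam : lam <> 0) (Hb1 : is_carlitz_bernoulli lam b1)
  (Hb2 : is_carlitz_bernoulli (lam / 2) b2).

Let c (n : nat) : R := (b1 n - 2 ^ n * b2 n) / INR (fact n).

(* [t / (E - 1) - 2t / (E^2 - 1) = t / (E + 1)] with [E^2 = e_{lam/2}(2t)]. *)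
Lemma carlitz_difference_egf : exists d, 0 < d /\ d <= / (1 + Rabs lam) /\
  forall t, 0 < Rabs t < d -> is_pseries c t (t / (e_deg lam t + 1)).
Proof.
destruct Hb1 as [d1 [Hd1 H1]], Hb2 as [d2 [Hd2 H2]].
set (rho := / (1 + Rabs lam)).
assert (Hrho : 0 < rho) by (apply Rinv_0_lt_compat; pose proof (Rabs_pos lam); lra).
exists (Rmin d1 (Rmin (d2 / 2) rho)).
assert (Hd1' := Rmin_l d1 (Rmin (d2 / 2) rho)).
assert (Hd2' := Rmin_l (d2 / 2) rho). assert (Hrho' := Rmin_r (d2 / 2) rho).
assert (Hmin := Rmin_r d1 (Rmin (d2 / 2) rho)).
split; [repeat apply Rmin_pos; lra | split; [lra|]].
intros t Ht.
set (E := e_deg lam t).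
assert (HE1 : E <> 1).
{ apply e_deg_neq1; [exact Hlam | |apply one_add_mul_gt0; fold rho; lra].
  intros ->. rewrite Rabs_R0 in Ht. lra. }
assert (HE0 : 0 < E) by apply e_deg_gt0.
assert (S1 := H1 t ltac:(lra)).
assert (S2 : is_pseries (fun n => b2 n / INR (fact n)) (2 * t) (2 * t / (E * E - 1))).
{ unfold E. rewrite <- e_deg_half_double by exact Hlam. apply H2.
  rewrite Rabs_mult, (Rabs_pos_eq 2) by lra. lra. }
apply is_pseries_R in S1, S2. apply is_pseries_R.
replace (t / (E + 1)) with (t / (E - 1) - 2 * t / (E * E - 1)).
- apply is_series_ext with (fun n => b1 n / INR (fact n) * t ^ n
                                   - b2 n / INR (fact n) * (2 * t) ^ n).
  + intros n. unfold c. rewrite Rpow_mult_distr. simpl. unfold Rdiv. ring.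
  + exact (is_series_minus _ _ _ _ S1 S2).
- assert (HEE : E * E - 1 <> 0).
  { intros Hz. assert (Hf : (E - 1) * (E + 1) = 0) by lra.
    apply Rmult_integral in Hf. lra. }
  field. repeat split; lra.
Qed.

Lemma carlitz_difference_conv (n : nat) :
  PS_mult c (e_deg_coef lam) n + c n = (if Nat.eqb n 1 then 1 else 0).
Proof.
destruct carlitz_difference_egf as [d [Hd [Hdrho Hc]]].
apply Rminus_diag_uniq. revert n.
apply (pseries_coef_eq0 _ d Hd). intros t Ht.
assert (HtE : Rabs t < / (1 + Rabs lam)) by lra.
assert (Hrc : Rbar_lt (Rabs t) (CV_radius c)).
{ apply (CV_radius_gt_punctured c d); [|lra].
  intros u Hu. eexists. apply Hc, Hu. }
assert (Hre : Rbar_lt (Rabs t) (CV_radius (e_deg_coef lam))).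
{ eapply Rbar_lt_le_trans; [|apply CV_radius_e_deg_coef]. exact HtE. }
assert (He : is_pseries (e_deg_coef lam) t (e_deg lam t)).
{ rewrite <- PSeries_e_deg_coef by assumption.
  apply PSeries_correct, CV_radius_inside, Hre. }
(* [C(t) (e_lam(t) + 1) - t = 0] *)
assert (Hprod := is_pseries_mult _ _ _ _ _ (Hc t Ht) He Hrc Hre).
assert (Hsum := is_pseries_plus _ _ _ _ _ Hprod (Hc t Ht)).
assert (Hdiff := is_pseries_minus _ _ _ _ _ Hsum (is_pseries_X t)).
pose proof (e_deg_gt0 lam t).
match type of Hdiff with is_pseries _ _ ?v =>
  replace v with 0 in Hdiff by (change (0 = t / (e_deg lam t + 1) * e_deg lam t
                                   + t / (e_deg lam t + 1) - t); field; lra) end.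
revert Hdiff. apply is_pseries_ext. intros k.
unfold PS_minus, PS_plus, plus, opp; simpl. ring.
Qed.

End CarlitzDifference.

Lemma W_deg_opp (S : nat -> nat -> R) (n : nat) (y : R) :
  sum_f_R0 (fun k => S n k * y ^ k * (-1) ^ k * INR (fact k)) n = W_deg S n (- y).
Proof.
unfold W_deg. apply sum_eq. intros k _.
replace (- y) with (y * -1) by ring. rewrite Rpow_mult_distr. ring.
Qed.

From mathcomp Require all_boot all_algebra Rstruct ring.

Module DegenerateStirling.
Import all_boot all_algebra Rstruct ring GRing.Theory Num.Theory.
Local Open Scope ring_scope.
Arguments dfall : simpl never.

Lemma dfall0 (lam x : R) : dfall lam x 0 = 1.
Proof. by []. Qed.

Lemma dfallS (lam x : R) (k : nat) : dfall lam x k.+1 = dfall lam x k * (x - k%:R * lam).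
Proof. by rewrite /dfall -/dfall INRE. Qed.

Lemma falling_natr (n k : nat) : falling n%:R k = (n ^_ k)%:R.
Proof.
rewrite /falling; elim: k => [|k IH]; first by rewrite ffactn0.
rewrite dfallS IH ffactnSr natrM mulr1.
have [le_kn|lt_nk] := leqP k n; first by rewrite natrB.
by rewrite ffact_small // !mul0r.
Qed.

(* Evaluate at [x = i] for [i = 0, 1, ...]: [(i)_k = 0] for [k > i] and [(i)_i = i!]. *)
Lemma falling_coef_eq0 (N : nat) (a : nat -> R) :
  (forall x, \sum_(k < N) a k * falling x k = 0) -> forall k, (k < N)%N -> a k = 0.
Proof.
move=> Ha; elim/ltn_ind => i IH ltiN.
have := Ha i%:R; rewrite (bigD1 (Ordinal ltiN)) //= big1 => [|j neji].
  rewrite addr0 falling_natr ffactnn => /eqP.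
  by rewrite mulf_eq0 pnatr_eq0 (negbTE (lt0n_neq0 (fact_gt0 i))) orbF => /eqP.
have [ltji|ltij|eqji] := ltngtP j i.
- by rewrite IH ?mul0r // (ltn_trans ltji ltiN).
- by rewrite falling_natr ffact_small // mulr0.
- by move: neji; rewrite -val_eqE /= eqji eqxx.
Qed.

Lemma dfallD (lam x y : R) (m : nat) : dfall lam (x + y) m =
  \sum_(j < m.+1) 'C(m, j)%:R * dfall lam x j * dfall lam y (m - j).
Proof.
elim: m => [|m IH]; first by rewrite big_ord1 !dfall0 !mul1r.
have step (j : 'I_m.+1) :
    'C(m, j)%:R * dfall lam x j * dfall lam y (m - j) * (x + y - m%:R * lam)
  = 'C(m, j)%:R * dfall lam x j.+1 * dfall lam y (m - j)
    + 'C(m, j)%:R * dfall lam x j * dfall lam y (m.+1 - j).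
  have le_jm : (j <= m)%N by rewrite -ltnS.
  by rewrite !dfallS subSn // dfallS natrB //; ring.
rewrite dfallS IH big_distrl (eq_bigr _ (fun j _ => step j)) big_split /=.
rewrite [RHS]big_ord_recl /= bin0 subn0 mul1r.
under [in RHS]eq_bigr => j _ do rewrite binS natrD !mulrDl.
rewrite big_split /= [X in _ = _ + X]addrC addrCA; congr (_ + _).
rewrite -[LHS](_ : \sum_(i < m.+2) 'C(m, i)%:R * dfall lam x i * dfall lam y (m.+1 - i) = _);
  last by rewrite big_ord_recr /= bin_small // !mul0r addr0.
by rewrite big_ord_recl bin0 subn0 mul1r.
Qed.

Lemma falling_addr1 (x : R) (k : nat) :
  falling (x + 1) k = falling x k + k%:R * falling x k.-1.
Proof.
rewrite /falling RplusE R1E; case: k => [|k]; first by rewrite !dfall0 mul0r addr0.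
elim: k => [|k IH]; first by rewrite !dfallS !dfall0; ring.
by rewrite dfallS IH !dfallS -!natr1; ring.
Qed.

Section DegenerateStirlingNumbers.

Variables (lam : R) (S : nat -> nat -> R).
Hypothesis HS : is_deg_stirling2 lam S.

(* [is_deg_stirling2] says nothing about [S n k] for [k > n]; [Sz] sets it to 0. *)
Let Sz (n k : nat) : R := if (k <= n)%N then S n k else 0.

Lemma widen_Sz (F : nat -> R) {N n : nat} : (n < N)%N ->
  \sum_(0 <= k < n.+1) S n k * F k = \sum_(k < N) Sz n k * F k.
Proof.
move=> ltnN; rewrite big_mkord (big_ord_widen N (fun k => S n k * F k)) // big_mkcond.
by apply: eq_bigr => k _; rewrite /Sz ltnS; case: ifP => // _; rewrite mul0r.
Qed.

Lemma dfall_Sz {N n : nat} (x : R) : (n < N)%N ->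
  dfall lam x n = \sum_(k < N) Sz n k * falling x k.
Proof. by move=> ltnN; rewrite HS sum_f_R0E (widen_Sz (falling x) ltnN). Qed.

Lemma W_deg_Sz {N n : nat} (x : R) : (n < N)%N ->
  W_deg S n x = \sum_(k < N) Sz n k * (k`!%:R * x ^+ k).
Proof.
move=> ltnN; rewrite /W_deg sum_f_R0E -(widen_Sz (fun k => k`!%:R * x ^+ k) ltnN).
by apply: eq_bigr => k _; rewrite !RealsE mulrA.
Qed.

Lemma deg_stirling2_n0 (n : nat) : S n 0 = (n == 0%N)%:R.
Proof.
have := HS n 0; rewrite sum_f_R0E big_nat_recl // big_nat big1 => [|k /andP[lt0k _]].
  rewrite addr0 /falling dfall0 RmultE mulr1 => <-.
  case: n => [|n]; first by rewrite dfall0.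
  elim: n => [|n IH]; first by rewrite dfallS dfall0 mul0r subrr mulr0.
  by rewrite dfallS IH mul0r.
by rewrite RealsE (falling_natr 0) ffact_small // mulr0.
Qed.

Lemma Sz_rec (m k : nat) : (k <= m)%N ->
  \sum_(j < m.+1) 'C(m, j)%:R * Sz j k * dfall lam 1 (m - j) = Sz m k + k.+1%:R * Sz m k.+1.
Proof.
move=> lekm; apply/eqP; rewrite -subr_eq0; apply/eqP; move: k lekm.
apply: (falling_coef_eq0 m.+1) => x; under eq_bigr => k _ do rewrite mulrBl.
rewrite sumrB.
apply/eqP; rewrite subr_eq0; apply/eqP.
transitivity (dfall lam (x + 1) m).
  rewrite dfallD; under eq_bigr => k _ do rewrite mulr_suml.
  rewrite exchange_big /=; apply: eq_bigr => j _.
  rewrite (dfall_Sz x (ltn_ord j)) mulr_sumr mulr_suml.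
  by apply: eq_bigr => k _; ring.
rewrite (dfall_Sz (N := m.+1)) //.
under eq_bigr => k _ do rewrite falling_addr1 mulrDr.
under [in RHS]eq_bigr => k _ do rewrite mulrDl.
rewrite !big_split /=; congr (_ + _).
rewrite big_ord_recl /= mul0r mulr0 add0r.
rewrite [RHS]big_ord_recr /= /Sz ltnn mulr0 mul0r addr0.
by apply: eq_bigr => k _; rewrite /bump /= add1n /=; case: ifP => _; ring.
Qed.

Lemma W_deg_rec (m : nat) (x : R) :
  x * \sum_(j < m.+1) 'C(m, j)%:R * W_deg S j x * dfall lam 1 (m - j)
  = W_deg S m x * (1 + x) - (m == 0%N)%:R.
Proof.
pose f k := Sz m k * (k`!%:R * x ^+ k).
transitivity (\sum_(k < m.+1) (x * f k + f k.+1)).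
  rewrite mulr_sumr.
  under eq_bigr => j _ do rewrite (W_deg_Sz x (ltn_ord j)) mulr_sumr mulr_suml mulr_sumr.
  rewrite exchange_big /=; apply: eq_bigr => k _.
  have lekm : (k <= m)%N by rewrite -ltnS.
  rewrite /f (_ : _ + _ = k`!%:R * x ^+ k.+1 * (Sz m k + k.+1%:R * Sz m k.+1)); last first.
    by rewrite factS natrM exprS; ring.
  rewrite -(Sz_rec m k lekm) mulr_sumr.
  by apply: eq_bigr => j _; rewrite exprS; ring.
have f0 : f 0%N = (m == 0%N)%:R by rewrite /f /Sz leq0n deg_stirling2_n0 expr0 !mulr1.
have Wm : W_deg S m x = \sum_(k < m.+1) f k by exact: W_deg_Sz.
have Wm_shift : W_deg S m x = f 0%N + \sum_(k < m.+1) f k.+1.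
  by rewrite (W_deg_Sz (N := m.+2)) // big_ord_recl.
rewrite big_split /= -mulr_sumr -Wm.
by move: Wm_shift; rewrite f0 => ->; ring.
Qed.

End DegenerateStirlingNumbers.

(* [conv_e1 lam a n] is [n!] times the [n]-th coefficient of [A(t) (e_lam(t) + 1)],
   where [A] is the exponential generating function of [a]. *)
Definition conv_e1 (lam : R) (a : nat -> R) (n : nat) : R :=
  (\sum_(k < n.+1) 'C(n, k)%:R * a k * dfall lam 1 (n - k) + a n)%R.

Lemma conv_e1_recr (lam : R) (a : nat -> R) (n : nat) :
  conv_e1 lam a n = \sum_(k < n) 'C(n, k)%:R * a k * dfall lam 1 (n - k) + a n *+ 2.
Proof.
by rewrite /conv_e1 big_ord_recr -[nat_of_ord _]/n binn subnn dfall0 mul1r mulr1 mulr2n addrA.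
Qed.

Lemma conv_e1_inj (lam : R) (a b : nat -> R) :
  (forall n, conv_e1 lam a n = conv_e1 lam b n) -> forall n, a n = b n.
Proof.
move=> Hab; elim/ltn_ind => n IH.
have := Hab n; rewrite !conv_e1_recr.
rewrite (eq_bigr (fun k : 'I_n => 'C(n, k)%:R * b k * dfall lam 1 (n - k))) => [|k _];
  last by rewrite IH.
by move/addrI/eqP; rewrite eqrMn2r => /eqP.
Qed.

Lemma conv_e1_mulX (lam : R) (a : nat -> R) (n : nat) :
  conv_e1 lam (fun k => k%:R * a k.-1) n = n%:R * conv_e1 lam a n.-1.
Proof.
case: n => [|n]; first by rewrite /conv_e1 big_ord1 !(mul0r, mulr0, addr0).
rewrite /conv_e1 big_ord_recl -[nat_of_ord ord0]/0%N mulr0n !(mul0r, mulr0) add0r mulrDr mulr_sumr.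
congr (_ + _).
apply: eq_bigr => k _; rewrite -[nat_of_ord (lift ord0 k)]/k.+1 -[k.+1.-1]/(k : nat) subSS.
have Ebin : ('C(n.+1, k.+1) * k.+1 = n.+1 * 'C(n, k))%N by rewrite mulnC -mul_bin_diag.
by rewrite mulrA -natrM Ebin natrM; ring.
Qed.

Lemma conv_e1_W_deg (lam : R) (S : nat -> nat -> R) : is_deg_stirling2 lam S ->
  forall n, conv_e1 lam (fun k => W_deg S k (- (1 / 2)) / 2) n = (n == 0%N)%:R.
Proof.
move=> HS n; set x := Ropp (Rdiv 1 2).
have hx : x = - 2^-1 by rewrite /x RoppE RdivE R1E IZRposE INRE /= mul1r.
have h := W_deg_rec lam S HS n x.
rewrite /conv_e1 (eq_bigr (fun k : 'I_n.+1 =>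
    'C(n, k)%:R * W_deg S k x * dfall lam 1 (n - k) / 2)) => [|k _]; last by ring.
rewrite -mulr_suml; move: h; move: (\sum_(_ < _) _) (W_deg S n x) => T W.
rewrite hx => h.
have -> : T / 2 = - (- 2^-1 * T) by ring.
by rewrite h; field.
Qed.

Lemma conv_e1_PS_mult (lam : R) (a : nat -> R) (n : nat) :
  n`!%:R * (PS_mult (fun k => a k / INR (fact k)) (e_deg_coef lam) n + a n / INR (fact n))
  = conv_e1 lam a n.
Proof.
have fact_neq0 m : m`!%:R != 0 :> R by rewrite pnatr_eq0 -lt0n fact_gt0.
rewrite /PS_mult /e_deg_coef sum_f_R0E big_mkord mulrDr mulr_sumr /conv_e1 !RealsE.
congr (_ + _); last by rewrite mulrC mulfVK.
apply: eq_bigr => k _; have lekn : (k <= n)%N by rewrite -ltnS.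
rewrite -(bin_fact lekn) !natrM.
rewrite !RealsE -[(n - k)%coq_nat]/(n - k)%N.
by field; rewrite !fact_neq0.
Qed.

Lemma conv_e1_delta1 (lam : R) (a : nat -> R) :
  (forall n, PS_mult (fun k => a k / INR (fact k)) (e_deg_coef lam) n + a n / INR (fact n)
             = if Nat.eqb n 1 then 1 else 0) ->
  forall n, conv_e1 lam a n = (n == 1%N)%:R.
Proof.
move=> Ha n; rewrite -conv_e1_PS_mult Ha.
by case: n => [|[|n]]; rewrite ?mulr0 ?mulr1.
Qed.

Lemma W_deg_neg_half (lam : R) (S : nat -> nat -> R) (a : nat -> R) :
  is_deg_stirling2 lam S -> (forall n, conv_e1 lam a n = (n == 1%N)%:R) ->
  forall n, W_deg S n (- (1 / 2)) = 2 / (INR n + 1) * a n.+1.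
Proof.
move=> HS Ha.
have Ea : forall n, a n = n%:R * (W_deg S n.-1 (- (1 / 2)) / 2).
  apply: (conv_e1_inj lam) => n.
  rewrite Ha (conv_e1_mulX lam (fun k => W_deg S k (- (1 / 2)) / 2)) conv_e1_W_deg //.
  by apply/eqP; rewrite -natrM eqr_nat; case: n => [|[|n]] //=; rewrite muln0.
by move=> n; rewrite Ea INRE natr1; field; rewrite nat1r pnatr_eq0.
Qed.

End DegenerateStirling.

Theorem theorem8 (lam : R) (S : nat -> nat -> R) (b1 b2 : nat -> R) :
  lam <> 0 ->
  is_deg_stirling2 lam S ->
  is_carlitz_bernoulli lam b1 ->
  is_carlitz_bernoulli (lam / 2) b2 ->
  forall n : nat,
    sum_f_R0 (fun k => S n k * (/ 2) ^ k * (-1) ^ k * INR (fact k)) n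
      = W_deg S n (- (1 / 2))
    /\ W_deg S n (- (1 / 2))
      = 2 / (INR n + 1) * (b1 (n + 1)%nat - 2 ^ (n + 1) * b2 (n + 1)%nat).
Proof.
intros Hlam HS Hb1 Hb2 n. split.
- rewrite W_deg_opp. unfold Rdiv. rewrite Rmult_1_l. reflexivity.
- rewrite Nat.add_1_r.
  refine (DegenerateStirling.W_deg_neg_half lam S (fun k => b1 k - 2 ^ k * b2 k) HS _ n).
  apply DegenerateStirling.conv_e1_delta1.
  exact (carlitz_difference_conv lam b1 b2 Hlam Hb1 Hb2).
Qed.
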